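(* Let $\star$ be a semistar operation on an integral domain $D$ and $T$ an overring of $D$. Then $T$ is $t$-linked to $(D,\star)$ if and only if $T^{\ell_{\star,T}}=T$.
   Context: Let $D$ be an integral domain with quotient field $K$. $\overline{\mathbf F}(D)$ denotes the set of all nonzero $D$-submodules of $K$ and $\mathbf f(D)$ the set of nonzero finitely generated $D$-submodules of $K$. A semistar operation on $D$ is a map $\star:\overline{\mathbf F}(D)\to\overline{\mathbf F}(D)$, $E\mapsto E^\star$, such that for all $0\ne x\in K$ and $E,F\in\overline{\mathbf F}(D)$: (1) $(xE)^\star=xE^\star$; (2) $E\subseteq F\Rightarrow E^\star\subseteq F^\star$; (3) $E\subseteq E^\star$ and $(E^\star)^\star=E^\star$. $\star_f$ is defined by $E^{\star_f}=\bigcup\{F^\star:F\in\mathbf f(D),F\subseteq E\}$. A nonzero ideal $I$ of $D$ is a quasi-$\star$-ideal if $I^\star\cap D=I$; a quasi-$\star$-prime is a prime quasi-$\star$-ideal. An overring of $D$ is a ring $T$ with $D\subseteq T\subseteq K$; semistar operations on $T$ are defined likewise. For an overring $T$, $v_T$ is $E\mapsto (T:_K(T:_KE))$ and $t_T:=(v_T)_f$. If $\star'$ is a semistar operation on $T$, $T$ is $(\star,\star')$-linked to $D$ if for every nonzero finitely generated ideal $F\subseteq D$ with $F^\star=D^\star$ one has $(FT)^{\star'}=T^{\star'}$; $T$ is $t$-linked to $(D,\star)$ if it is $(\star,t_T)$-linked to $D$. The semistar operation $\ell_{\star,T}$ on $T$ is defined by $E^{\ell_{\star,T}}=\bigcap\{ET_{D\setminus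 P}: P$ a quasi-$\star_f$-prime ideal of $D\}$ for $E\in\overline{\mathbf F}(T)$ (equal to $K$ if there are none). *)

From HB Require Import structures.
From mathcomp Require Import all_boot all_algebra.
From mathcomp Require Import boolp classical_sets.
Set Implicit Arguments. Unset Strict Implicit. Unset Printing Implicit Defensive.
Import GRing.Theory.
Local Open Scope ring_scope.
Local Open Scope classical_set_scope.

Section Defs.
Variable K : fieldType.

Definition subring (R : set K) : Prop :=
  R 0 /\ R 1 /\ (forall x y, R x -> R y -> R (x - y)) /\
  (forall x y, R x -> R y -> R (x * y)).

Definition quotient_field_of (D : set K) : Prop :=
  forall x : K, exists a b, D a /\ D b /\ b != 0 /\ x = a / b.

Definition domain_with_qf (D : set K) : Prop := subring D /\ quotient_field_of D.

Definition submodule (R E : set K) : Prop :=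
  E 0 /\ (forall x y, E x -> E y -> E (x + y)) /\
  (forall a x, R a -> E x -> E (a * x)).

Definition nonzero (E : set K) : Prop := exists x, E x /\ x != 0.

Definition Fbar (R E : set K) : Prop := submodule R E /\ nonzero E.

Definition span (R : set K) (s : seq K) : set K :=
  [set x | exists c : nat -> K, (forall i, R (c i)) /\
                                x = \sum_(i < size s) c i * s`_i].

Definition fg (R E : set K) : Prop := Fbar R E /\ exists s, E = span R s.

Definition scale_set (x : K) (E : set K) : set K := [set y | exists e, E e /\ y = x * e].

(* star is a semistar operation on R (only its values on \bar F(R) matter). *)
Definition semistar (R : set K) (star : set K -> set K) : Prop :=
  (forall E, Fbar R E -> Fbar R (star E)) /\
  (forall x E, x != 0 -> Fbar R E -> star (scale_set x E) = scale_set x (star E)) /\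
  (forall E F, Fbar R E -> Fbar R F -> E `<=` F -> star E `<=` star F) /\
  (forall E, Fbar R E -> E `<=` star E /\ star (star E) = star E).

Definition finite_type (R : set K) (star : set K -> set K) : set K -> set K :=
  fun E => [set x | exists F, fg R F /\ F `<=` E /\ star F x].

Definition colon (T E : set K) : set K := [set x | forall e, E e -> T (x * e)].

Definition v_op (T : set K) : set K -> set K := fun E => colon T (colon T E).
Definition t_op (T : set K) : set K -> set K := finite_type T (v_op T).

Definition ideal (D I : set K) : Prop := I `<=` D /\ submodule D I.

Definition quasi_ideal (D : set K) (star : set K -> set K) (I : set K) : Prop :=
  ideal D I /\ nonzero I /\ star I `&` D = I.

Definition prime_ideal (D P : set K) : Prop :=
  ideal D P /\ ~ P 1 /\ (forall a b, D a -> D b -> P (a * b) -> P a \/ P b).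

Definition quasi_prime (D : set K) (star : set K -> set K) (P : set K) : Prop :=
  prime_ideal D P /\ quasi_ideal D star P.

Definition overring (D T : set K) : Prop := subring T /\ D `<=` T.

Definition prod_mod (A E : set K) : set K :=
  [set x | exists (n : nat) (a e : nat -> K), (forall i, A (a i)) /\
           (forall i, E (e i)) /\ x = \sum_(i < n) a i * e i].

Definition linked (D : set K) (star : set K -> set K) (T : set K)
  (star' : set K -> set K) : Prop :=
  forall F, fg D F -> F `<=` D -> star F = star D ->
    star' (prod_mod T F) = star' T.

Definition t_linked (D : set K) (star : set K -> set K) (T : set K) : Prop :=
  linked D star T (t_op T).

Definition loc (T D P : set K) : set K :=
  [set x | exists t s, T t /\ D s /\ ~ P s /\ x = t / s].

(* ell_{star,T}: intersection over quasi-star_f-primes (= K if none) *)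
Definition ell (D : set K) (star : set K -> set K) (T : set K) : set K -> set K :=
  fun E => [set x | forall P, quasi_prime D (finite_type D star) P ->
                              prod_mod (loc T D P) E x].

End Defs.

From Pilot Require Import Defs.
From HB Require Import structures.
From mathcomp Require Import all_boot all_algebra.
From mathcomp Require Import boolp classical_sets.
From mathcomp Require Import ring.
Set Implicit Arguments. Unset Strict Implicit. Unset Printing Implicit Defensive.
Import GRing.Theory.
Local Open Scope ring_scope.
Local Open Scope classical_set_scope.

(** For [F <= D] finitely generated with [F^star = D^star], [F] lies in no quasi-[star_f]-prime
    [P] (else [1 \in F^star \cap D <= P]), so any [y] with [y F <= T] lies in every [T_{D\P}],
    hence in [T^{ell}]; if [T^{ell} = T] this gives [(FT)^t = T].
    Conversely, for [x \in T^{ell}] consider the conductor [J = (T :_D x)]. If [1 \in J^{star_f}],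
    t-linkedness yields [x \in T] directly. Otherwise, by Zorn, [J] lies in an ideal maximal among
    those [I] with [1 \notin I^{star_f}]; such an ideal is a quasi-[star_f]-prime [P], and writing
    [x = t / s] in [T_{D\P}] exhibits [s \in J \ P], a contradiction. *)

Local Notation span := Defs.span.

Section Subring.
Variables (K : fieldType) (R : set K).
Hypothesis hR : subring R.
Implicit Types s : seq K.

Lemma subring0 : R 0. Proof. by case: hR. Qed.
Lemma subring1 : R 1. Proof. by case: hR => _ []. Qed.
Lemma subringM x y : R x -> R y -> R (x * y). Proof. by case: hR => _ [_ [_]]; apply. Qed.

Lemma subringD x y : R x -> R y -> R (x + y).
Proof.
case: hR => R0 [_ [RB _]] Rx Ry; have := RB x (0 - y) Rx (RB _ _ R0 Ry).
by rewrite sub0r opprK.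
Qed.

Lemma Fbar_self : Fbar R R.
Proof.
split; first by split; [exact: subring0|split; [exact: subringD|exact: subringM]].
by exists 1; split; [exact: subring1|exact: oner_neq0].
Qed.

Lemma span_nil x : span R [::] x <-> x = 0.
Proof.
split; first by case=> c [_ ->]; rewrite big_ord0.
by move=> ->; exists (fun _ => 0); split; [move=> _; exact: subring0|rewrite big_ord0].
Qed.

Lemma span_cons a s x :
  span R (a :: s) x <-> exists r y, [/\ R r, span R s y & x = r * a + y].
Proof.
split.
  case=> c [Rc ->]; exists (c 0%N), (\sum_(i < size s) c i.+1 * s`_i).
  by split => //; [exists (fun i => c i.+1)|rewrite /= big_ord_recl].
case=> r [y [Rr [c [Rc ->]] ->]].
exists (fun i => if i is j.+1 then c j else r); split; first by case.
by rewrite /= big_ord_recl.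
Qed.

Lemma span_submod s : submodule R (span R s).
Proof.
elim: s => [|a s [IH0 [IHD IHM]]].
  split; first exact/span_nil.
  split; first by move=> x y /span_nil -> /span_nil ->; apply/span_nil; rewrite addr0.
  by move=> r x _ /span_nil ->; apply/span_nil; rewrite mulr0.
split; first by apply/span_cons; exists 0, 0; rewrite mul0r addr0; split => //; exact: subring0.
split.
  move=> x y /span_cons [r [u [Rr Su ->]]] /span_cons [r' [u' [Rr' Su' ->]]].
  apply/span_cons; exists (r + r'), (u + u'); split; [exact: subringD|exact: IHD|].
  by rewrite mulrDl addrACA.
move=> b x Rb /span_cons [r [u [Rr Su ->]]].
apply/span_cons; exists (b * r), (b * u); split; [exact: subringM|exact: IHM|].
by rewrite mulrDr mulrA.
Qed.

Lemma span_mem s x : x \in s -> span R s x.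
Proof.
elim: s => [//|a s IH]; rewrite inE => /orP[/eqP ->|xs]; apply/span_cons.
  exists 1, 0; rewrite mul1r addr0; split => //; first exact: subring1.
  by case: (span_submod s).
by exists 0, x; rewrite mul0r add0r; split => //; [exact: subring0|exact: IH].
Qed.

Lemma span_sub E s : submodule R E -> (forall x, x \in s -> E x) -> span R s `<=` E.
Proof.
move=> [E0 [ED EM]]; elim: s => [|a s IH] sE x; first by move/span_nil ->.
case/span_cons => r [y [Rr Sy ->]]; apply: ED; first by apply: EM => //; apply: sE; exact: mem_head.
by apply: IH => // z zs; apply: sE; rewrite inE zs orbT.
Qed.

Lemma span_subset s1 s2 : {subset s1 <= s2} -> span R s1 `<=` span R s2.
Proof. by move=> s12; apply: (span_sub (span_submod s2)) => x /s12; exact: span_mem. Qed.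

Lemma fg_span s : nonzero (span R s) -> fg R (span R s).
Proof. by move=> nz; split; [split => //; exact: span_submod|exists s]. Qed.

Lemma fg_span_mem s x : x \in s -> x != 0 -> fg R (span R s).
Proof. by move=> xs x0; apply: fg_span; exists x; split => //; exact: span_mem. Qed.

Lemma span_scale a s : scale_set a (span R s) = span R (map (fun y => a * y) s).
Proof.
apply/seteqP; split; elim: s => [|b s IH] z /=.
- by case=> e [/span_nil -> ->]; apply/span_nil; rewrite mulr0.
- case=> e [/span_cons [r [y [Rr Sy ->]]] ->]; apply/span_cons.
  exists r, (a * y); split => //; first by apply: IH; exists y.
  by rewrite mulrDr mulrCA.
- by move/span_nil ->; exists 0; rewrite mulr0; split => //; exact/span_nil.
- case/span_cons => r [y [Rr /IH [e [Se ->]] ->]].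
  exists (r * b + e); split; first by apply/span_cons; exists r, e.
  by rewrite mulrDr mulrCA.
Qed.

Lemma fg_scale a G : a != 0 -> fg R G -> fg R (scale_set a G).
Proof.
move=> a0 [[_ [g [Gg g0]]] [s Gs]]; rewrite Gs span_scale; apply: fg_span.
by exists (a * g); rewrite -span_scale -Gs mulf_neq0 //; split => //; exists g.
Qed.

End Subring.

Lemma span_mono (K : fieldType) (R R' : set K) (s : seq K) : R `<=` R' -> span R s `<=` span R' s.
Proof. by move=> RR' x [c [Rc ->]]; exists c; split => // i; apply: RR'. Qed.

Section Modules.
Variable K : fieldType.
Implicit Types (R A E F B : set K) (s : seq K).

Lemma submodule_setI R E F : submodule R E -> submodule R F -> submodule R (E `&` F).
Proof.
move=> [E0 [ED EM]] [F0 [FD FM]]; split => //; split.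
  by move=> x y [Ex Fx] [Ey Fy]; split; [exact: ED|exact: FD].
by move=> a x Ra [Ex Fx]; split; [exact: EM|exact: FM].
Qed.

Lemma prod_mod_sub A E B : B 0 -> (forall x y, B x -> B y -> B (x + y)) ->
  (forall a e, A a -> E e -> B (a * e)) -> prod_mod A E `<=` B.
Proof.
by move=> B0 BD BM x [n [a [e [Aa [Ee ->]]]]]; apply: (big_ind B) => // i _; apply: BM.
Qed.

Lemma prod_mod_unit A E y : A y -> E 1 -> prod_mod A E y.
Proof. by move=> Ay E1; exists 1%N, (fun _ => y), (fun _ => 1); rewrite big_ord1 mulr1. Qed.

Lemma span_sub_prod_mod R E s :
  E 0 -> (forall x, x \in s -> E x) -> span R s `<=` prod_mod R E.
Proof.
move=> E0 sE x [c [Rc ->]]; exists (size s), c, (nth 0 s); split => //; split => // i.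
by case: (ltnP i (size s)) => hi; [apply: sE; exact: mem_nth|rewrite nth_default].
Qed.

End Modules.

Lemma bigcup_chain_seq (T : eqType) (F : set (set T)) (s : seq T) :
  F !=set0 -> total_on F subset ->
  (forall x, x \in s -> (\bigcup_(X in F) X) x) -> exists2 X, F X & forall x, x \in s -> X x.
Proof.
move=> [X0 FX0] Ftot; elim: s => [|a s IH] sF; first by exists X0.
have [X FX sX] : exists2 X, F X & forall x, x \in s -> X x.
  by apply: IH => x xs; apply: sF; rewrite inE xs orbT.
have [Y FY Ya] := sF a (mem_head a s).
have [XY|YX] := Ftot X Y FX FY.
- by exists Y => // x; rewrite inE => /orP[/eqP ->//|/sX]; exact: XY.
- by exists X => // x; rewrite inE => /orP[/eqP ->|/sX//]; exact: YX.
Qed.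

Lemma Zorn_bigcup_above (T : Type) (P : set (set T)) (J : set T) : P J ->
  (forall F, F !=set0 -> F `<=` P -> total_on F subset -> P (\bigcup_(X in F) X)) ->
  exists M, [/\ P M, J `<=` M & forall Q, P Q -> M `<=` Q -> Q `<=` M].
Proof.
move=> PJ Pchain.
(* Zorn is applied to [X |-> P (X `|` J)], whose chains, once joined with [J], are nonempty. *)
have [A [PA Amax]] : exists A, P (A `|` J) /\ forall B, A `<` B -> ~ P (B `|` J).
  apply: (Zorn_bigcup (P := fun X => P (X `|` J))) => F FP Ftot.
  pose G := [set Y | Y = J \/ exists2 X, F X & Y = X `|` J].
  have -> : \bigcup_(X in F) X `|` J = \bigcup_(Y in G) Y.
    apply/seteqP; split => x.
      case=> [[X FX Xx]|Jx]; last by exists J => //; left.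
      by exists (X `|` J); [right; exists X|left].
    by case=> Y [->|[X FX ->]]; [right|case=> [Xx|Jx]; [left; exists X|right]].
  apply: Pchain; first by exists J; left.
    by move=> Y [->|[X FX ->]]; [|exact: FP].
  move=> Y Y' [->|[X FX ->]] [->|[X' FX' ->]].
  - by left.
  - by left; exact: subsetUr.
  - by right; exact: subsetUr.
  - by case: (Ftot X X' FX FX') => XX'; [left|right]; exact: setSU.
exists (A `|` J); split => [//||Q PQ AQ]; first exact: subsetUr.
move=> x Qx; apply: contrapT => nAx; apply: (Amax Q).
  by split=> [y Ay|QA]; [apply: AQ; left|apply: nAx; left; exact: QA].
by rewrite setUidl // => y Jy; apply: AQ; right.
Qed.

Section Semistar.
Variables (K : fieldType) (D : set K) (star : set K -> set K).
Hypotheses (hD : subring D) (hs : semistar D star).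
Implicit Types s : seq K.

Lemma semistar_Fbar E : Fbar D E -> Fbar D (star E). Proof. exact: hs.1. Qed.
Lemma semistar_ext E : Fbar D E -> E `<=` star E. Proof. by move=> hE; case: (hs.2.2.2 E hE). Qed.
Lemma semistar_idem E : Fbar D E -> star (star E) = star E.
Proof. by move=> hE; case: (hs.2.2.2 E hE). Qed.
Lemma semistar_mono E F : Fbar D E -> Fbar D F -> E `<=` F -> star E `<=` star F.
Proof. exact: hs.2.2.1. Qed.
Lemma semistar_scale x E : x != 0 -> Fbar D E -> star (scale_set x E) = scale_set x (star E).
Proof. exact: hs.2.1. Qed.

Lemma semistar_eq_of_one G : Fbar D G -> G `<=` D -> star G 1 -> star G = star D.
Proof.
move=> hG GD G1; have hsG := semistar_Fbar hG.
apply/seteqP; split; first exact: semistar_mono (Fbar_self hD) GD.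
have DsG : D `<=` star G by move=> d Dd; rewrite -[d]mulr1; exact: hsG.1.2.2.
by rewrite -(semistar_idem hG); exact: semistar_mono (Fbar_self hD) hsG DsG.
Qed.

Lemma finite_type_mono E F : E `<=` F -> finite_type D star E `<=` finite_type D star F.
Proof. by move=> EF x [G [fG [GE Gx]]]; exists G; split => //; split => // y /GE /EF. Qed.

Lemma finite_type_ext M : Fbar D M -> M `<=` finite_type D star M.
Proof.
move=> [hM [z [Mz z0]]] m Mm; have zs : z \in [:: z; m] by rewrite mem_head.
have fS := fg_span_mem hD zs z0.
exists (span D [:: z; m]); split => //; split.
  by apply: (span_sub hD hM) => x; rewrite !inE => /orP[] /eqP ->.
by apply: (semistar_ext fS.1); apply: (span_mem hD); rewrite !inE eqxx orbT.
Qed.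

Lemma finite_type_directed M s : Fbar D M ->
  (forall y, y \in s -> finite_type D star M y) ->
  exists H, [/\ fg D H, H `<=` M & forall y, y \in s -> star H y].
Proof.
move=> hM; elim: s => [|a s IH] sM.
  have [z [Mz z0]] := hM.2; have zs : z \in [:: z] by rewrite mem_head.
  exists (span D [:: z]); split => //; first exact (fg_span_mem hD zs z0).
  by apply: (span_sub hD hM.1) => x; rewrite inE => /eqP ->.
have [H1 [fH1 H1M sH1]] : exists H, [/\ fg D H, H `<=` M & forall y, y \in s -> star H y].
  by apply: IH => y ys; apply: sM; rewrite inE ys orbT.
have [H2 [fH2 [H2M H2a]]] := sM a (mem_head a s).
case: fH1 fH2 => [hH1 [u1 eH1]] [hH2 [u2 eH2]]; subst H1 H2.
have H1H : span D u1 `<=` span D (u1 ++ u2).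
  by apply: span_subset => // x xu; rewrite mem_cat xu.
have H2H : span D u2 `<=` span D (u1 ++ u2).
  by apply: span_subset => // x xu; rewrite mem_cat xu orbT.
have [[_ [w [Hw w0]]] _] : fg D (span D u1) by split => //; exists u1.
have fH : fg D (span D (u1 ++ u2)) by apply: fg_span => //; exists w; split => //; exact: H1H.
exists (span D (u1 ++ u2)); split => //.
  apply: (span_sub hD hM.1) => x; rewrite mem_cat => /orP[] xu.
    by apply: H1M; exact: span_mem.
  by apply: H2M; exact: span_mem.
move=> y; rewrite inE => /orP[/eqP ->|ys].
  exact: semistar_mono hH2 fH.1 H2H _ H2a.
exact: semistar_mono hH1 fH.1 H1H _ (sH1 y ys).
Qed.

Lemma finite_type_submod M : Fbar D M -> submodule D (finite_type D star M).
Proof.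
move=> hM; split; first by apply: (finite_type_ext hM); case: hM.1.
split.
  move=> x y Mx My.
  have [H [fH HM sH]] : exists H, [/\ fg D H, H `<=` M & forall z, z \in [:: x; y] -> star H z].
    by apply: finite_type_directed => // z; rewrite !inE => /orP[] /eqP ->.
  exists H; split => //; split => //.
  by apply: (semistar_Fbar fH.1).1.2.1; apply: sH; rewrite !inE eqxx ?orbT.
move=> r x Dr [H [fH [HM Hx]]]; exists H; split => //; split => //.
exact: (semistar_Fbar fH.1).1.2.2.
Qed.

Lemma finite_type_idem M : Fbar D M ->
  finite_type D star (finite_type D star M) `<=` finite_type D star M.
Proof.
move=> hM x [G [fG [GM Gx]]]; have [_ [s Gs]] := fG.
have [H [fH HM sH]] : exists H, [/\ fg D H, H `<=` M & forall y, y \in s -> star H y].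
  by apply: finite_type_directed => // y ys; apply: GM; rewrite Gs; exact: (span_mem hD).
have GH : G `<=` star H by rewrite Gs; exact: (span_sub hD (semistar_Fbar fH.1).1 sH).
exists H; split => //; split => //.
by rewrite -(semistar_idem fH.1); exact: semistar_mono fG.1 (semistar_Fbar fH.1) GH _ Gx.
Qed.

Lemma finite_type_scale a M x : a != 0 ->
  finite_type D star M x -> finite_type D star (scale_set a M) (a * x).
Proof.
move=> a0 [G [fG [GM Gx]]]; exists (scale_set a G); split; first exact: fg_scale.
split; first by move=> y [e [Ge ->]]; exists e; split => //; exact: GM.
by rewrite semistar_scale //; [exists x|exact: fG.1].
Qed.

Definition star_f_proper (I : set K) := ideal D I /\ ~ finite_type D star I 1.

Lemma star_f_proper_bigcup (F : set (set K)) : F !=set0 -> F `<=` star_f_proper ->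
  total_on F subset -> star_f_proper (\bigcup_(X in F) X).
Proof.
move=> F0 FP Ftot; have in_one := bigcup_chain_seq F0 Ftot.
split; [split; [|split; [|split]]|].
- by move=> x [X FX Xx]; exact: (FP X FX).1.1.
- by have [X FX] := F0; exists X => //; case: (FP X FX).1.2.
- move=> x y Ux Uy; have [z|X FX Xxy] := in_one [:: x; y].
    by rewrite !inE => /orP[] /eqP ->.
  by exists X => //; apply: (FP X FX).1.2.2.1; apply: Xxy; rewrite !inE eqxx ?orbT.
- by move=> r x Dr [X FX Xx]; exists X => //; exact: (FP X FX).1.2.2.2.
- move=> [G [fG [GU G1]]]; have [_ [s Gs]] := fG.
  have [x xs|X FX sX] := in_one s; first by apply: GU; rewrite Gs; exact: (span_mem hD).
  apply: (FP X FX).2; exists G; split => //; split => //.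
  by rewrite Gs; exact: (span_sub hD (FP X FX).1.2 sX).
Qed.

Section Maximal.
Variable M : set K.
Hypotheses (hM : star_f_proper M) (Mnz : nonzero M)
  (Mmax : forall Q, star_f_proper Q -> M `<=` Q -> Q `<=` M).

Let hMF : Fbar D M := conj hM.1.2 Mnz.

Lemma maximal_star_f_closed : finite_type D star M `&` D = M.
Proof.
have Mext : M `<=` finite_type D star M `&` D.
  by move=> m Mm; split; [exact: finite_type_ext|exact: hM.1.1].
apply/seteqP; split => //; apply: Mmax => //; split.
  split; first exact: subIsetr.
  exact: submodule_setI (finite_type_submod hMF) (Fbar_self hD).1.
by move=> /(finite_type_mono (@subIsetl _ _ _)) /(finite_type_idem hMF); exact: hM.2.
Qed.

Lemma maximal_prime : prime_ideal D M.
Proof.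
have [MD [M0 [MA MM]]] := hM.1.
split; first exact: hM.1.
split; first by move=> /(finite_type_ext hMF); exact: hM.2.
move=> a b Da Db Mab; apply: contrapT => /not_orP [nMa nMb].
pose Q := [set d | D d /\ M (d * a)].
have hQ : ideal D Q.
  split; first by move=> d [].
  split; first by split; [exact: subring0|rewrite mul0r].
  split; first by move=> x y [Dx Mx] [Dy My]; split; [exact: subringD|rewrite mulrDl; exact: MA].
  by move=> r x Dr [Dx Mx]; split; [exact: subringM|rewrite -mulrA; exact: MM].
have MQ : M `<=` Q by move=> d Md; split; [exact: MD|rewrite mulrC; exact: MM].
(* [Q] strictly contains [M] (it contains [b]), so maximality forces [1 \in Q^{star_f}]. *)
have Q1 : finite_type D star Q 1.
  apply: contrapT => nQ1; apply: nMb; apply: (Mmax (conj hQ nQ1) MQ).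
  by split; last rewrite mulrC.
have a0 : a != 0 by apply: contraPneq nMa => ->.
apply: nMa; rewrite -maximal_star_f_closed; split => //.
have := finite_type_scale a0 Q1; rewrite mulr1; apply: finite_type_mono.
by move=> y [d [[_ Mda] ->]]; rewrite mulrC.
Qed.

End Maximal.

Lemma quasi_prime_above J : star_f_proper J -> nonzero J ->
  exists2 P, quasi_prime D (finite_type D star) P & J `<=` P.
Proof.
move=> hJ [z [Jz z0]].
have [M [hM JM Mmax]] := Zorn_bigcup_above hJ star_f_proper_bigcup.
have Mnz : nonzero M by exists z; split => //; exact: JM.
exists M => //; split; first exact: maximal_prime.
by split; [exact: hM.1|split; [exact: Mnz|exact: maximal_star_f_closed]].
Qed.

Lemma quasi_prime_not_sub P F : quasi_prime D (finite_type D star) P ->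
  fg D F -> F `<=` D -> star F = star D -> exists2 f, F f & ~ P f.
Proof.
move=> [[_ [nP1 _]] [_ [_ Pq]]] fF FD sFD; apply: contrapT => nFP.
apply: nP1; rewrite -Pq; split; last exact: subring1.
exists F; split => //; split.
  by move=> f Ff; apply: contrapT => nPf; apply: nFP; exists f.
by rewrite sFD; apply: (semistar_ext (Fbar_self hD)); exact: subring1.
Qed.

End Semistar.

Section TOperation.
Variables (K : fieldType) (T : set K).
Hypothesis hT : subring T.

Lemma t_op_sub E : E `<=` T -> t_op T E `<=` T.
Proof.
move=> ET x [F [_ [FE Fx]]]; rewrite -[x]mulr1; apply: Fx => e Fe.
by rewrite mul1r; exact: ET (FE e Fe).
Qed.

Lemma sub_t_op E G : fg T G -> G `<=` E -> colon T G `<=` T -> T `<=` t_op T E.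
Proof.
move=> fG GE GT x Tx; exists G; split => //; split => // y /GT Ty.
exact: subringM.
Qed.

Lemma t_op_self : t_op T T = T.
Proof.
have one : (1 : K) \in [:: 1] by rewrite mem_head.
apply/seteqP; split; first exact: t_op_sub.
apply: (sub_t_op (fg_span_mem hT one (oner_neq0 K))).
  by apply: (span_sub hT (Fbar_self hT).1) => x; rewrite inE => /eqP ->; exact: subring1.
by move=> y /(_ 1 (span_mem hT one)); rewrite mulr1.
Qed.

End TOperation.

Section Overring.
Variables (K : fieldType) (D T : set K) (star : set K -> set K).
Hypotheses (hD : subring D) (hs : semistar D star) (hT : subring T) (DT : D `<=` T).

Section Localization.
Variable P : set K.
Hypothesis hP : prime_ideal D P.

Lemma loc_denom_neq0 s : ~ P s -> s != 0.
Proof. by move=> nPs; apply/eqP => s0; apply: nPs; rewrite s0; case: hP => [[_ []]]. Qed.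

Lemma sub_loc : T `<=` loc T D P.
Proof.
move=> t Tt; exists t, 1; rewrite divr1; split => //; split; first exact: subring1.
by split; [case: hP => _ []|].
Qed.

Lemma prod_mod_loc : prod_mod (loc T D P) T `<=` loc T D P.
Proof.
have [_ [_ Pp]] := hP.
apply: prod_mod_sub; first by apply: sub_loc; exact: subring0.
  move=> _ _ [t [s [Tt [Ds [nPs ->]]]]] [t' [s' [Tt' [Ds' [nPs' ->]]]]].
  exists (t * s' + t' * s), (s * s'); split.
    by apply: subringD => //; apply: subringM => //; exact: DT.
  split; first exact: subringM.
  split; first by case/Pp.
  by field; rewrite !loc_denom_neq0.
move=> _ e [t [s [Tt [Ds [nPs ->]]]]] Te; exists (t * e), s; split; first exact: subringM.
by rewrite mulrAC.
Qed.

End Localization.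

Lemma ell_ext : T `<=` ell D star T T.
Proof.
by move=> y Ty P [hP _]; apply: prod_mod_unit; [exact: sub_loc|exact: subring1].
Qed.

Lemma t_linked_of_ell : ell D star T T = T -> t_linked D star T.
Proof.
move=> ellT F fF FD sFD; rewrite t_op_self //.
have [[[F0 _] [z [Fz z0]]] [s Fs]] := fF.
have FG : F `<=` span T s by rewrite Fs; exact: span_mono.
have GFT : span T s `<=` prod_mod T F.
  by apply: span_sub_prod_mod => // x xs; rewrite Fs; exact: (span_mem hD).
have fG : fg T (span T s) by apply: fg_span => //; exists z; split => //; exact: FG.
apply/seteqP; split.
  apply: t_op_sub => //; apply: prod_mod_sub; [exact: subring0|exact: subringD|].
  by move=> a e Ta Fe; apply: subringM => //; apply: DT; exact: FD.
apply: (sub_t_op hT fG GFT) => y yG; rewrite -ellT => P hP.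
have [f Ff nPf] := quasi_prime_not_sub hD hs hP fF FD sFD.
apply: prod_mod_unit; last exact: subring1.
exists (y * f), f; split; first exact: yG (FG f Ff).
split; first exact: FD.
by split; [|rewrite mulfK // (loc_denom_neq0 hP.1)].
Qed.

Definition conductor (x : K) := [set d | D d /\ T (d * x)].

Lemma conductor_ideal x : ideal D (conductor x).
Proof.
split; first by move=> d [].
split; first by split; [exact: subring0|rewrite mul0r; exact: subring0].
split.
  by move=> d d' [Dd Td] [Dd' Td']; split; [exact: subringD|rewrite mulrDl; exact: subringD].
by move=> r d Dr [Dd Td]; split; [exact: subringM|rewrite -mulrA; apply: subringM => //; exact: DT].
Qed.

Lemma conductor_nonzero x : quotient_field_of D -> nonzero (conductor x).
Proof.
move=> qf; have [a [b [Da [Db [b0 ->]]]]] := qf x.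
by exists b; split => //; split => //; rewrite mulrC divfK //; exact: DT.
Qed.

Lemma loc_conductor P x : prime_ideal D P -> loc T D P x -> exists2 s, conductor x s & ~ P s.
Proof.
move=> hP [t [s [Tt [Ds [nPs ->]]]]]; exists s => //; split => //.
by rewrite mulrC divfK // (loc_denom_neq0 hP).
Qed.

(* A finitely generated [G <= (T :_D x)] with [G^star = D^star] has [(GT)^t = T] by
   t-linkedness, and [x (GT) <= T] then forces [x \in T]. *)
Lemma mem_of_conductor x : t_linked D star T ->
  finite_type D star (conductor x) 1 -> T x.
Proof.
move=> tl [G [fG [GJ G1]]].
have GD : G `<=` D by move=> g /GJ [].
have tGT := tl G fG GD (semistar_eq_of_one hD hs fG.1 GD G1); rewrite t_op_self // in tGT.
have [H [_ [HG Hv]]] : t_op T (prod_mod T G) 1 by rewrite tGT; exact: subring1.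
rewrite -[x]mul1r; apply: Hv => y /HG; apply: (prod_mod_sub (B := [set y | T (x * y)])).
- by rewrite /= mulr0; exact: subring0.
- by move=> u v Tu Tv; rewrite /= mulrDr; exact: subringD.
- by move=> a e Ta /GJ [_ Tex]; rewrite /= mulrCA [x * e]mulrC; exact: subringM.
Qed.

Lemma ell_of_t_linked : quotient_field_of D -> t_linked D star T -> ell D star T T = T.
Proof.
move=> qf tl; apply/seteqP; split => [x ellx|]; last exact: ell_ext.
have [|Jproper] := pselect (finite_type D star (conductor x) 1).
  exact: mem_of_conductor.
have [P hP JP] := quasi_prime_above hD hs (conj (conductor_ideal x) Jproper)
  (conductor_nonzero x qf).
have [s Js nPs] := loc_conductor hP.1 (prod_mod_loc hP.1 (ellx P hP)).
by case: nPs; exact: JP.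
Qed.

End Overring.

Theorem proposition3p16 (K : fieldType) (D T : set K) (star : set K -> set K) :
  domain_with_qf D -> semistar D star -> overring D T ->
  (t_linked D star T <-> ell D star T T = T).
Proof.
move=> [hD qf] hs [hT DT]; split.
  exact: ell_of_t_linked.
exact: t_linked_of_ell.
Qed.
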